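(* Let $G$ be a real $n\times m$ matrix and $\mathbf v\in\mathbb R^n$, and let $\mathcal G=\{x\in\mathbb R^m: Gx\le \mathbf v\}$ (componentwise). Let $P$ be the nonnegative orthant of $\mathbb R^n$ and $F=\mathcal R(G)$. Write $\mathbf v=\mathbf v_F+\upsilon$, where $\mathbf v_F$ is the orthogonal projection of $\mathbf v$ onto $F$ and $\upsilon$ is the orthogonal projection of $\mathbf v$ onto $F^\perp$. Assume $\upsilon\neq 0$ and $F\cap P=\{0\}$. Let $F_e=\mathrm{span}(\upsilon)+F$. Every $y\in F_e$ can be written uniquely as $y=\beta(y)\upsilon+z$ with $\beta(y)\in\mathbb R$ and $z\in F$. Then the following hold. 1. If $F_e\cap P\neq\{0\}$, then the sign of $\beta(y)$ is the same for all nonzero $y\in F_e\cap P$, and this sign is nonzero. 2. $\mathcal G\neq\emptyset$ if and only if $F_e\cap P\neq\{0\}$ and $\beta(y)>0$ for the nonzero $y\in F_e\cap P$.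
   Context: Uniqueness of the decomposition holds because $\upsilon\perp F$ and $\upsilon\ne0$. *)

From HB Require Import structures.
From mathcomp Require Import all_boot all_order all_algebra.
From mathcomp Require Import reals.
Set Implicit Arguments. Unset Strict Implicit. Unset Printing Implicit Defensive.
Import Order.TTheory GRing.Theory Num.Theory.
Local Open Scope ring_scope.

Section Defs.
Variable R : realType.

Definition dotv n (u w : 'cV[R]_n) : R := \sum_(i < n) u i 0 * w i 0.

Definition in_orthant n (y : 'cV[R]_n) : Prop := forall i, 0 <= y i 0.

Definition in_range n m (G : 'M[R]_(n, m)) (y : 'cV[R]_n) : Prop :=
  exists x : 'cV[R]_m, y = G *m x.

Definition orth_range n m (G : 'M[R]_(n, m)) (u : 'cV[R]_n) : Prop :=
  forall z, in_range G z -> dotv u z = 0.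

Definition in_Fe n m (G : 'M[R]_(n, m)) (ups y : 'cV[R]_n) : Prop :=
  exists b : R, exists z, in_range G z /\ y = b *: ups + z.

(* b = beta(y): y = b ups + z with z in F (unique since ups in F^perp, ups <> 0) *)
Definition is_beta n m (G : 'M[R]_(n, m)) (ups y : 'cV[R]_n) (b : R) : Prop :=
  exists z, in_range G z /\ y = b *: ups + z.

Definition in_poly n m (G : 'M[R]_(n, m)) (v : 'cV[R]_n) (x : 'cV[R]_m) : Prop :=
  forall i, (G *m x) i 0 <= v i 0.

End Defs.

(** If two nonzero vectors y1, y2 of F_e ∩ P had coordinates β1 > 0 > β2
    along υ, the nonnegative combination (-β2) y1 + β1 y2 would lose its
    υ-component, hence lie in F ∩ P = {0}, forcing y1 = 0; and β(y) = 0
    would put y itself in F ∩ P. So all nonzero y in F_e ∩ P share one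
    nonzero sign. A point x is feasible iff its slack v - G x is
    nonnegative; the slack lies in F_e with β = 1, and is nonzero because
    υ ∉ F. Conversely, if y ≥ 0 has β > 0, then v - y/β ∈ F = R(G) is some
    G x, and G x ≤ v. *)
From HB Require Import structures.
From mathcomp Require Import all_boot all_order all_algebra.
From mathcomp Require Import reals.
Set Implicit Arguments. Unset Strict Implicit. Unset Printing Implicit Defensive.
Import Order.TTheory GRing.Theory Num.Theory.
Local Open Scope ring_scope.

Section Range.
Variables (R : realType) (n m : nat) (G : 'M[R]_(n, m)).

Lemma in_range_mulmx x : in_range G (G *m x).
Proof. by exists x. Qed.

Lemma in_range_add z1 z2 :
  in_range G z1 -> in_range G z2 -> in_range G (z1 + z2).
Proof. by move=> [x1 ->] [x2 ->]; exists (x1 + x2); rewrite mulmxDr. Qed.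

Lemma in_range_scale a z : in_range G z -> in_range G (a *: z).
Proof. by move=> [x ->]; exists (a *: x); rewrite scalemxAr. Qed.

Lemma in_range_opp z : in_range G z -> in_range G (- z).
Proof. by rewrite -scaleN1r; apply: in_range_scale. Qed.

Lemma in_range_sub z1 z2 :
  in_range G z1 -> in_range G z2 -> in_range G (z1 - z2).
Proof. by move=> r1 r2; apply: in_range_add r1 (in_range_opp r2). Qed.

End Range.

Lemma dotvv_eq0 (R : realType) n (u : 'cV[R]_n) : (dotv u u == 0) = (u == 0).
Proof.
apply/eqP/eqP => [uu0|->]; last first.
  by rewrite /dotv big1 // => i _; rewrite mxE mul0r.
apply/matrixP => i j; rewrite ord1 mxE.
have sq_ge0 k : true -> 0 <= u k 0 * u k 0 by rewrite -expr2 sqr_ge0.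
by apply/eqP; rewrite -[_ == 0]orbb -mulf_eq0 (psumr_eq0P sq_ge0 uu0).
Qed.

Lemma orth_range_in_range_eq0 (R : realType) n m (G : 'M[R]_(n, m)) u :
  orth_range G u -> in_range G u -> u = 0.
Proof. by move=> orth ru; apply/eqP; rewrite -dotvv_eq0 (orth u ru). Qed.

Section Orthant.
Variables (R : realType) (n : nat).
Implicit Types (y : 'cV[R]_n) (a : R).

Lemma in_orthant_add y1 y2 :
  in_orthant y1 -> in_orthant y2 -> in_orthant (y1 + y2).
Proof. by move=> o1 o2 i; rewrite mxE addr_ge0. Qed.

Lemma in_orthant_scale a y : 0 <= a -> in_orthant y -> in_orthant (a *: y).
Proof. by move=> a_ge0 o i; rewrite mxE mulr_ge0. Qed.

Lemma in_orthant_add_eq0 y1 y2 :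
  in_orthant y1 -> in_orthant y2 -> y1 + y2 = 0 -> y1 = 0.
Proof.
move=> o1 o2 /matrixP y12; apply/matrixP => i j; rewrite ord1 mxE.
have := y12 i 0; rewrite !mxE => /eqP.
by rewrite paddr_eq0 // => /andP[/eqP].
Qed.

End Orthant.

Section Beta.
Variables (R : realType) (n m : nat) (G : 'M[R]_(n, m)) (ups : 'cV[R]_n).
Hypothesis range_orthant_eq0 : forall y, in_range G y -> in_orthant y -> y = 0.

Lemma beta_neq0 y b : is_beta G ups y b -> in_orthant y -> y != 0 -> b != 0.
Proof.
move=> [z [rz ->]] o; apply: contra_neq => b0.
by rewrite b0 scale0r add0r in o *; apply: range_orthant_eq0.
Qed.

Lemma beta_not_opposite y1 y2 b1 b2 :
  is_beta G ups y1 b1 -> is_beta G ups y2 b2 ->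
  in_orthant y1 -> in_orthant y2 ->
  y1 != 0 -> 0 < b1 -> b2 < 0 -> False.
Proof.
move=> [z1 [r1 e1]] [z2 [r2 e2]] o1 o2 /eqP y1_neq0 b1_gt0 b2_lt0.
apply: y1_neq0.
have nb2_gt0 : 0 < - b2 by rewrite oppr_gt0.
have o1' := in_orthant_scale (ltW nb2_gt0) o1.
have o2' := in_orthant_scale (ltW b1_gt0) o2.
have cancel_ups : (- b2) *: y1 + b1 *: y2 = (- b2) *: z1 + b1 *: z2.
  rewrite e1 e2 !scalerDr !scalerA [b1 * b2]mulrC mulNr scaleNr.
  by rewrite addrACA addNr add0r.
have comb0 : (- b2) *: y1 + b1 *: y2 = 0.
  apply: range_orthant_eq0 (in_orthant_add o1' o2').
  by rewrite cancel_ups; apply: in_range_add; apply: in_range_scale.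
have /eqP := in_orthant_add_eq0 o1' o2' comb0.
by rewrite scaler_eq0 (gt_eqF nb2_gt0) => /eqP.
Qed.

Lemma beta_sg_eq y1 y2 b1 b2 :
  is_beta G ups y1 b1 -> is_beta G ups y2 b2 ->
  in_orthant y1 -> in_orthant y2 ->
  y1 != 0 -> y2 != 0 -> Num.sg b1 = Num.sg b2.
Proof.
move=> e1 e2 o1 o2 nz1 nz2.
case: (ltrgtP b1 0) (beta_neq0 e1 o1 nz1) => // b1_sg _;
  case: (ltrgtP b2 0) (beta_neq0 e2 o2 nz2) => // b2_sg _.
- by rewrite !ltr0_sg.
- by case: (beta_not_opposite e2 e1 o2 o1 nz2 b2_sg b1_sg).
- by case: (beta_not_opposite e1 e2 o1 o2 nz1 b1_sg b2_sg).
- by rewrite !gtr0_sg.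
Qed.

End Beta.

Section Feasibility.
Variables (R : realType) (n m : nat) (G : 'M[R]_(n, m)) (v vF ups : 'cV[R]_n).
Hypotheses (rvF : in_range G vF) (v_split : v = vF + ups).

Lemma slack_beta1 x : is_beta G ups (v - G *m x) 1.
Proof.
exists (vF - G *m x); split; first exact: in_range_sub rvF (in_range_mulmx G x).
by rewrite scale1r v_split addrCA addrA.
Qed.

Lemma slack_in_orthant x : in_poly G v x -> in_orthant (v - G *m x).
Proof. by move=> feas i; have := feas i; rewrite !mxE subr_ge0. Qed.

Lemma slack_neq0 x : orth_range G ups -> ups != 0 -> v - G *m x != 0.
Proof.
move=> orth; apply: contra_neq => slack0.
apply: orth_range_in_range_eq0 orth _.
have -> : ups = G *m x - vF.
  by apply/eqP; rewrite -subr_eq0 opprB addrCA addrA -v_split slack0.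
exact: in_range_sub (in_range_mulmx G x) rvF.
Qed.

Lemma feasible_of_beta_gt0 y b :
  is_beta G ups y b -> in_orthant y -> 0 < b -> exists x, in_poly G v x.
Proof.
case: rvF => xF evF [_ [[x0 ->] ey]] o b_gt0.
exists (xF - b^-1 *: x0) => i.
have -> : G *m (xF - b^-1 *: x0) = v - b^-1 *: y.
  rewrite mulmxBr -scalemxAr -evF v_split ey scalerDr scalerA mulVf ?gt_eqF //.
  by rewrite scale1r opprD addrA addrK.
by rewrite !mxE gerBl mulr_ge0 // invr_ge0 ltW.
Qed.

End Feasibility.

Theorem mainTheorem3 (R : realType) (n m : nat) (G : 'M[R]_(n, m))
    (v vF ups : 'cV[R]_n) :
  (* v = vF + ups: orthogonal projections onto F = R(G) and onto F^perp *)
  in_range G vF -> orth_range G ups -> v = vF + ups ->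
  ups != 0 ->
  (forall y, in_range G y -> in_orthant y -> y = 0) ->
  (* 1. *)
  ((exists y, in_Fe G ups y /\ in_orthant y /\ y != 0) ->
     exists s : R, s != 0 /\
       forall y b, in_Fe G ups y -> in_orthant y -> y != 0 ->
         is_beta G ups y b -> Num.sg b = s)
  /\
  (* 2. *)
  ((exists x, in_poly G v x) <->
     ((exists y, in_Fe G ups y /\ in_orthant y /\ y != 0) /\
      forall y b, in_Fe G ups y -> in_orthant y -> y != 0 ->
         is_beta G ups y b -> 0 < b)).
Proof.
move=> rvF orth v_split ups_neq0 FP.
have slack_beta x := slack_beta1 rvF v_split x.
have slack_nz x := slack_neq0 rvF v_split x orth ups_neq0.
split; last split.
- move=> [y0 [[b0 e0] [o0 nz0]]]; exists (Num.sg b0).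
  rewrite sgr_eq0 (beta_neq0 FP e0 o0 nz0); split=> // y b _ o nz e.
  exact: (beta_sg_eq FP e e0 o o0 nz nz0).
- move=> [x feas]; have o1 := slack_in_orthant feas.
  split=> [|y b _ o nz e].
    by exists (v - G *m x); split; [exists 1; apply: slack_beta | split].
  have := beta_sg_eq FP e (slack_beta x) o o1 nz (slack_nz x).
  by rewrite sgr1 => /eqP; rewrite sgr_cp0.
- move=> [[y0 [[b0 e0] [o0 nz0]]] beta_gt0].
  have b0_gt0 := beta_gt0 y0 b0 (ex_intro _ b0 e0) o0 nz0 e0.
  exact: (feasible_of_beta_gt0 rvF v_split e0 o0 b0_gt0).
Qed.
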